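(* There is an absolute constant $c>0$ such that for every $m$ there is an instance with two additive buyers and $m$ identical items (each buyer has the same value for all items) such that, for every selling order, there is a tie-breaking rule and a pure subgame perfect equilibrium of the resulting sequential first-price auction whose social welfare is at most $\mathrm{OPT}/(cm)$, where $\mathrm{OPT}$ is the maximum possible social welfare. In other words, the price of anarchy for additive buyers is $\Omega(m)$, even for identical items and for any selling order.
   Context: Setting (sequential first-price auctions): there is a set $M$ of $m$ items and a set $N$ of buyers. A buyer $i$ is additive if there are $v_{i,j}\ge 0$ with $v_i(S)=\sum_{j\in S}v_{i,j}$; utilities are quasi-linear. Items are sold one at a time; each item is sold by a sealed-bid first-price auction without reserve price: every buyer submits a nonnegative bid, a highest bidder wins (ties broken by a tie-breaking rule fixed by the seller) and pays his bid. The seller fixes the selling order (possibly as a function of the allocation of previously sold items) and the tie-breaking rule. There is full information. A pure subgame perfect equilibrium is a profile of pure strategies (a bid for each buyer at each node of the game tree) that is a Nash equilibrium in every subgame. Social welfare is the sum of the buyers' values for their bundles; the price of anarchy is the ratio of the maximum social welfare to the worst social welfare of an equilibrium. *)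

From Stdlib Require Import Reals Lra List.
Import ListNotations.
Open Scope R_scope.

Inductive buyer := B1 | B2.

Definition buyer_eqb (i j : buyer) : bool :=
  match i, j with B1, B1 | B2, B2 => true | _, _ => false end.

(** A bid history (node of the game tree): the list of bid profiles
    (bid of B1, bid of B2) submitted in the auctions already run. *)
Definition history := list (R * R).

Definition strategy := history -> R.
Definition profile := buyer -> strategy.

(** Allocation history: list of (item sold, winner) of previous auctions. *)
Definition alloc_history := list (nat * buyer).

(** Selling order: next item, as a function of the allocation so far. *)
Definition selling_order := alloc_history -> nat.

Definition valid_order (m : nat) (ord : selling_order) : Prop :=
  forall acc : alloc_history, (length acc < m)%nat ->
    (ord acc < m)%nat /\ ~ In (ord acc) (map fst acc).

Definition tie_rule := alloc_history -> buyer.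

Definition winner (tb : tie_rule) (acc : alloc_history) (b1 b2 : R) : buyer :=
  if Rlt_dec b2 b1 then B1 else if Rlt_dec b1 b2 then B2 else tb acc.

Definition bid_of (i : buyer) (b1 b2 : R) : R :=
  match i with B1 => b1 | B2 => b2 end.

(** Outcome of a full bid history: list of (item, winner, price paid). *)
Fixpoint outcome_aux (ord : selling_order) (tb : tie_rule)
    (acc : alloc_history) (bids : history) : list (nat * buyer * R) :=
  match bids with
  | [] => []
  | (b1, b2) :: rest =>
      let w := winner tb acc b1 b2 in
      let j := ord acc in
      (j, w, bid_of w b1 b2) :: outcome_aux ord tb (acc ++ [(j, w)]) rest
  end.

Definition outcome ord tb (bids : history) := outcome_aux ord tb [] bids.

Fixpoint play (s : profile) (n : nat) (h : history) : history :=
  match n with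
  | O => h
  | S n' => play s n' (h ++ [(s B1 h, s B2 h)])
  end.

Definition final (m : nat) (s : profile) (h : history) : history :=
  play s (m - length h) h.

(** Identical items: v i is buyer i's value for each single item;
    additive valuation, quasi-linear utility. *)
Definition utility (v : buyer -> R) (i : buyer) (out : list (nat * buyer * R)) : R :=
  fold_right (fun '(_, w, p) acc =>
                (if buyer_eqb w i then v i - p else 0) + acc) 0 out.

Definition social_welfare (v : buyer -> R) (out : list (nat * buyer * R)) : R :=
  fold_right (fun '(_, w, _) acc => v w + acc) 0 out.

Definition deviate (s : profile) (i : buyer) (s' : strategy) : profile :=
  fun j => if buyer_eqb j i then s' else s j.

Definition nonneg_strategy (s : strategy) : Prop := forall h, 0 <= s h.

Definition nonneg_history (h : history) : Prop :=
  forall b, In b h -> 0 <= fst b /\ 0 <= snd b.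

(** Pure subgame perfect equilibrium: a Nash equilibrium in every subgame,
    i.e. at every (nonterminal) node reachable with nonnegative bids. *)
Definition is_SPE (m : nat) (ord : selling_order) (tb : tie_rule)
    (v : buyer -> R) (s : profile) : Prop :=
  (forall i, nonneg_strategy (s i)) /\
  forall h : history, nonneg_history h -> (length h < m)%nat ->
  forall (i : buyer) (s' : strategy), nonneg_strategy s' ->
    utility v i (outcome ord tb (final m (deviate s i s') h))
      <= utility v i (outcome ord tb (final m s h)).

Definition eq_welfare m ord tb v (s : profile) : R :=
  social_welfare v (outcome ord tb (final m s [])).

(** Welfare of an allocation (item j goes to a j) of items 0..m-1. *)
Fixpoint sumR (f : nat -> R) (n : nat) : R :=
  match n with O => 0 | S n' => sumR f n' + f n' end.

Definition alloc_welfare (m : nat) (v : buyer -> R) (a : nat -> buyer) : R :=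
  sumR (fun j => v (a j)) m.

Definition is_OPT (m : nat) (v : buyer -> R) (opt : R) : Prop :=
  (exists a, alloc_welfare m v a = opt) /\
  (forall a, alloc_welfare m v a <= opt).

(* Buyer 1 values every item at 1 and buyer 2 at 0, so OPT = m, whatever the
   selling order (the items are identical).  Both buyers bid 0 as long as buyer 1
   has won nothing, and such ties go to buyer 2 except on the last item; once
   buyer 1 has won an item both bid 1 and ties go to buyer 1.  On the path
   buyer 2 gets the first m - 1 items and buyer 1 the last one, so the welfare
   is 1 = OPT / m.  Buyer 1 gains nothing by grabbing an earlier item with a
   bid b > 0: every later item then costs him his full value, so his utility is
   at most 1 - b.  Buyer 2, with value 0 and nonnegative bids, can never gain. *)

From Stdlib Require Import Reals List Lra Lia Bool.
Import ListNotations.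
Open Scope R_scope.

Lemma utility_app (v : buyer -> R) (i : buyer) (l1 l2 : list (nat * buyer * R)) :
  utility v i (l1 ++ l2) = utility v i l1 + utility v i l2.
Proof. induction l1 as [|[[j w] p] l IH]; simpl; [lra | rewrite IH; lra]. Qed.

Lemma social_welfare_app (v : buyer -> R) (l1 l2 : list (nat * buyer * R)) :
  social_welfare v (l1 ++ l2) = social_welfare v l1 + social_welfare v l2.
Proof. induction l1 as [|[[j w] p] l IH]; simpl; [lra | rewrite IH; lra]. Qed.

Section Outcome.
Variables (ord : selling_order) (tb : tie_rule).

Definition sold (h : history) : alloc_history := map fst (outcome ord tb h).

Lemma outcome_aux_snoc (h : history) (acc : alloc_history) (b1 b2 : R) :
  outcome_aux ord tb acc (h ++ [(b1, b2)]) =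
  outcome_aux ord tb acc h ++
    [let acc' := acc ++ map fst (outcome_aux ord tb acc h) in
     let w := winner tb acc' b1 b2 in (ord acc', w, bid_of w b1 b2)].
Proof.
  revert acc; induction h as [|[x1 x2] h IH]; intros acc; simpl.
  - rewrite app_nil_r; reflexivity.
  - rewrite IH; simpl; rewrite <- app_assoc; reflexivity.
Qed.

Lemma outcome_snoc (h : history) (b1 b2 : R) :
  outcome ord tb (h ++ [(b1, b2)]) =
  outcome ord tb h ++
    [(ord (sold h), winner tb (sold h) b1 b2,
      bid_of (winner tb (sold h) b1 b2) b1 b2)].
Proof. unfold outcome, sold; rewrite outcome_aux_snoc; reflexivity. Qed.

Lemma sold_snoc (h : history) (b1 b2 : R) :
  sold (h ++ [(b1, b2)]) = sold h ++ [(ord (sold h), winner tb (sold h) b1 b2)].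
Proof. unfold sold at 1; rewrite outcome_snoc, map_app; reflexivity. Qed.

Lemma sold_length (h : history) : length (sold h) = length h.
Proof.
  unfold sold, outcome; rewrite length_map; generalize (@nil (nat * buyer)).
  induction h as [|[x1 x2] h IH]; intros acc; simpl; auto.
Qed.

Lemma utility_snoc_loser (v : buyer -> R) (i : buyer) (h : history) (b1 b2 : R) :
  winner tb (sold h) b1 b2 <> i ->
  utility v i (outcome ord tb (h ++ [(b1, b2)])) = utility v i (outcome ord tb h).
Proof.
  intros Hlose; rewrite outcome_snoc, utility_app; simpl.
  destruct (winner tb (sold h) b1 b2), i; simpl; try congruence; lra.
Qed.

End Outcome.

Lemma winner_positive_bid (tb : tie_rule) (acc : alloc_history) (b : R) :
  0 < b -> winner tb acc b 0 = B1.
Proof. intros Hb; unfold winner; destruct (Rlt_dec 0 b); [reflexivity | lra]. Qed.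

Section Potential.
Variables (m : nat) (p : profile) (Phi : nat -> history -> R).

Lemma play_potential_le :
  (forall n h, (length h + S n = m)%nat ->
     Phi n (h ++ [(p B1 h, p B2 h)]) <= Phi (S n) h) ->
  forall n h, (length h + n = m)%nat -> Phi O (play p n h) <= Phi n h.
Proof.
  intros Hstep n; induction n as [|n IH]; intros h Hlen; simpl; [lra |].
  eapply Rle_trans; [apply IH | apply Hstep; lia].
  rewrite length_app; simpl; lia.
Qed.

Lemma play_potential_eq :
  (forall n h, (length h + S n = m)%nat ->
     Phi n (h ++ [(p B1 h, p B2 h)]) = Phi (S n) h) ->
  forall n h, (length h + n = m)%nat -> Phi O (play p n h) = Phi n h.
Proof.
  intros Hstep n; induction n as [|n IH]; intros h Hlen; simpl; [reflexivity |].
  rewrite IH, Hstep; [reflexivity | lia | rewrite length_app; simpl; lia].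
Qed.

End Potential.

Definition grim_values (i : buyer) : R := match i with B1 => 1 | B2 => 0 end.

Definition B1_has_won (acc : alloc_history) : bool :=
  existsb (fun x => buyer_eqb (snd x) B1) acc.

(* Ties go to buyer 1 once he has won an item, and otherwise only at the last
   auction, the one after [m - 1] sales. *)
Definition grim_tie (m : nat) (acc : alloc_history) : buyer :=
  if B1_has_won acc || Nat.eqb (length acc) (m - 1) then B1 else B2.

Lemma B1_has_won_snoc (acc : alloc_history) (j : nat) (w : buyer) :
  B1_has_won (acc ++ [(j, w)]) = B1_has_won acc || buyer_eqb w B1.
Proof. unfold B1_has_won; rewrite existsb_app; simpl; rewrite orb_false_r; reflexivity. Qed.

Lemma grim_winner_after_B1_won (m : nat) (acc : alloc_history) (b1 b2 : R) :
  B1_has_won acc = true ->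
  winner (grim_tie m) acc b1 b2 = if Rlt_dec b1 b2 then B2 else B1.
Proof.
  intros Hwon; unfold winner, grim_tie; rewrite Hwon; simpl.
  destruct (Rlt_dec b2 b1), (Rlt_dec b1 b2); auto; lra.
Qed.

Section Grim.
Variables (m : nat) (ord : selling_order).

Notation sold := (sold ord (grim_tie m)).
Notation outcome := (outcome ord (grim_tie m)).
Notation U i out := (utility grim_values i out).

Definition grim_bid : strategy := fun h => if B1_has_won (sold h) then 1 else 0.

Definition grim_profile : profile := fun _ => grim_bid.

(* Buyer 1's utility from the remaining [n] auctions on the equilibrium path. *)
Definition B1_value_to_go (n : nat) (h : history) : R :=
  match n with O => 0 | S _ => if B1_has_won (sold h) then 0 else 1 end.

Lemma B1_value_to_go_le_1 (n : nat) (h : history) : B1_value_to_go n h <= 1.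
Proof. destruct n; simpl; [lra | destruct B1_has_won; lra]. Qed.

Lemma B1_value_to_go_after_B1_won (n : nat) (h : history) :
  B1_has_won (sold h) = true -> B1_value_to_go n h = 0.
Proof. intros Hwon; destruct n; simpl; [| rewrite Hwon]; reflexivity. Qed.

Lemma B1_has_won_sold_snoc (h : history) (b1 b2 : R) :
  B1_has_won (sold (h ++ [(b1, b2)])) =
  B1_has_won (sold h) || buyer_eqb (winner (grim_tie m) (sold h) b1 b2) B1.
Proof. rewrite sold_snoc, B1_has_won_snoc; reflexivity. Qed.

Lemma grim_winner_zero_bids (n : nat) (h : history) :
  B1_has_won (sold h) = false -> (length h + S n = m)%nat ->
  winner (grim_tie m) (sold h) 0 0 = match n with O => B1 | S _ => B2 end.
Proof.
  intros Hwon Hlen; rewrite <- (sold_length ord (grim_tie m)) in Hlen.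
  set (acc := sold h) in *.
  unfold winner, grim_tie; rewrite Hwon; destruct (Rlt_dec 0 0); [lra |]; simpl.
  destruct n; [rewrite (proj2 (Nat.eqb_eq _ _)) | rewrite (proj2 (Nat.eqb_neq _ _))];
    auto; lia.
Qed.

Lemma B1_deviation_step (n : nat) (h : history) (b : R) :
  0 <= b -> (length h + S n = m)%nat ->
  U B1 (outcome (h ++ [(b, grim_bid h)])) + B1_value_to_go n (h ++ [(b, grim_bid h)])
  <= U B1 (outcome h) + B1_value_to_go (S n) h.
Proof.
  intros Hb Hlen; rewrite outcome_snoc, utility_app; unfold grim_bid.
  destruct (B1_has_won (sold h)) eqn:Hwon.
  - rewrite !B1_value_to_go_after_B1_won, grim_winner_after_B1_won by
      (rewrite ?B1_has_won_sold_snoc, ?Hwon; reflexivity).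
    destruct (Rlt_dec b 1); simpl; lra.
  - change (B1_value_to_go (S n) h) with (if B1_has_won (sold h) then 0 else 1); rewrite Hwon.
    destruct (Rlt_dec 0 b) as [Hpos | Hzero].
    + rewrite B1_value_to_go_after_B1_won
        by (rewrite B1_has_won_sold_snoc, winner_positive_bid; auto with bool).
      rewrite winner_positive_bid by exact Hpos; simpl; lra.
    + replace b with 0 by lra.
      pose proof (B1_value_to_go_le_1 n (h ++ [(0, 0)])).
      rewrite (grim_winner_zero_bids n h Hwon Hlen).
      destruct n; simpl in *; lra.
Qed.

Lemma B1_equilibrium_step (n : nat) (h : history) :
  (length h + S n = m)%nat ->
  U B1 (outcome (h ++ [(grim_bid h, grim_bid h)]))
    + B1_value_to_go n (h ++ [(grim_bid h, grim_bid h)])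
  = U B1 (outcome h) + B1_value_to_go (S n) h.
Proof.
  intros Hlen; rewrite outcome_snoc, utility_app; unfold grim_bid.
  destruct (B1_has_won (sold h)) eqn:Hwon.
  - rewrite !B1_value_to_go_after_B1_won, grim_winner_after_B1_won by
      (rewrite ?B1_has_won_sold_snoc, ?Hwon; reflexivity).
    destruct (Rlt_dec 1 1); [lra |]; simpl; lra.
  - rewrite (grim_winner_zero_bids n h Hwon Hlen).
    destruct n as [|n]; simpl; rewrite Hwon; [lra |].
    rewrite B1_has_won_sold_snoc, Hwon, (grim_winner_zero_bids (S n) h Hwon Hlen).
    simpl; lra.
Qed.

Lemma B2_deviation_step (h : history) (b1 b2 : R) :
  0 <= b2 -> U B2 (outcome (h ++ [(b1, b2)])) <= U B2 (outcome h).
Proof.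
  intros Hb; rewrite outcome_snoc, utility_app.
  destruct (winner (grim_tie m) (sold h) b1 b2); simpl; lra.
Qed.

Lemma B2_equilibrium_step (h : history) :
  U B2 (outcome (h ++ [(grim_bid h, grim_bid h)])) = U B2 (outcome h).
Proof.
  unfold grim_bid; destruct (B1_has_won (sold h)) eqn:Hwon.
  - apply utility_snoc_loser; rewrite grim_winner_after_B1_won by exact Hwon.
    destruct (Rlt_dec 1 1); [lra | discriminate].
  - rewrite outcome_snoc, utility_app.
    destruct (winner (grim_tie m) (sold h) 0 0); simpl; lra.
Qed.

Lemma grim_is_SPE : is_SPE m ord (grim_tie m) grim_values grim_profile.
Proof.
  split; [intros i h; unfold grim_profile, grim_bid; destruct B1_has_won; lra |].
  intros h _ Hlen i s' Hs'; unfold final.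
  assert (Hrest : (length h + (m - length h) = m)%nat) by lia.
  destruct i.
  - pose proof (play_potential_le m (deviate grim_profile B1 s')
      (fun n h => U B1 (outcome h) + B1_value_to_go n h)
      (fun n h' Hl => B1_deviation_step n h' (s' h') (Hs' h') Hl) _ _ Hrest) as Hdev.
    pose proof (play_potential_eq m grim_profile
      (fun n h => U B1 (outcome h) + B1_value_to_go n h)
      (fun n h' Hl => B1_equilibrium_step n h' Hl) _ _ Hrest) as Heq.
    simpl in Hdev, Heq; lra.
  - pose proof (play_potential_le m (deviate grim_profile B2 s')
      (fun _ h => U B2 (outcome h))
      (fun n h' _ => B2_deviation_step h' _ _ (Hs' h')) _ _ Hrest) as Hdev.
    pose proof (play_potential_eq m grim_profile (fun _ h => U B2 (outcome h))
      (fun n h' _ => B2_equilibrium_step h') _ _ Hrest) as Heq.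
    simpl in Hdev, Heq; lra.
Qed.

Lemma grim_path_welfare (n : nat) (h : history) :
  (length h + n = m)%nat -> B1_has_won (sold h) = false ->
  social_welfare grim_values (outcome (play grim_profile n h))
  = social_welfare grim_values (outcome h) + B1_value_to_go n h.
Proof.
  revert h; induction n as [|n IH]; intros h Hlen Hwon; simpl play; [simpl; lra |].
  pose proof (grim_winner_zero_bids n h Hwon Hlen) as Hwin.
  unfold grim_profile, grim_bid; rewrite Hwon.
  destruct n as [|n].
  - simpl play; rewrite outcome_snoc, social_welfare_app, Hwin; simpl; rewrite Hwon; lra.
  - rewrite IH by (rewrite ?length_app, ?B1_has_won_sold_snoc, ?Hwon, ?Hwin;
                   simpl; auto; lia).
    rewrite outcome_snoc, social_welfare_app, Hwin; simpl.
    rewrite B1_has_won_sold_snoc, Hwon, Hwin; simpl; lra.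
Qed.

Lemma grim_eq_welfare :
  (1 <= m)%nat -> eq_welfare m ord (grim_tie m) grim_values grim_profile = 1.
Proof.
  intros Hm; unfold eq_welfare, final; simpl length; rewrite Nat.sub_0_r.
  rewrite grim_path_welfare by (simpl; auto).
  destruct m; [lia |]; simpl; lra.
Qed.

End Grim.

Lemma is_OPT_grim_values (m : nat) : is_OPT m grim_values (INR m).
Proof.
  split; [exists (fun _ => B1) | intros a]; unfold alloc_welfare.
  - induction m as [|m IH]; [reflexivity |].
    cbn [sumR]; rewrite S_INR, IH; simpl; lra.
  - induction m as [|m IH]; simpl sumR; [simpl; lra |].
    rewrite S_INR; destruct (a m); simpl; lra.
Qed.

Theorem mainTheorem3 :
  exists c : R, 0 < c /\
  forall m : nat, (1 <= m)%nat ->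
  exists v : buyer -> R, (forall i, 0 <= v i) /\
  exists opt : R, is_OPT m v opt /\ 0 < opt /\
  forall ord : selling_order, valid_order m ord ->
  exists (tb : tie_rule) (s : profile),
    is_SPE m ord tb v s /\ eq_welfare m ord tb v s <= opt / (c * INR m).
Proof.
  exists 1; split; [lra |]; intros m Hm.
  exists grim_values; split; [intros []; simpl; lra |].
  assert (Hpos : 0 < INR m) by (apply lt_0_INR; lia).
  exists (INR m); split; [apply is_OPT_grim_values |]; split; [exact Hpos |].
  intros ord _; exists (grim_tie m), (grim_profile m ord).
  split; [apply grim_is_SPE |].
  rewrite grim_eq_welfare by exact Hm.
  replace (INR m / (1 * INR m)) with 1 by (field; lra); lra.
Qed.
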